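(* In the setting of the context, for every integer $m\ge2$ the inclusion $\Gamma(G_{m-1},S_{m-1})\hookrightarrow\Gamma(G_m,S_m)$ of Cayley graphs is an isometric embedding.
   Context: $H$ is a finitely presented group with finite generating set $T$, containing a free subgroup $F$ of rank $p$ with free basis $\{d_1,\dots,d_p\}\subset T$ (standing assumption: $\mathrm{Dist}_F^H$ admits an exponentially bounded sequence of palindromic certificates in $F$). $F_x,F_y,F_z$ are free of rank $p$ with bases $R_x=\{x_i\},R_y=\{y_i\},R_z=\{z_i\}$. $G_1=[H\ast_{\langle d_i=x_iy_i^{-1}\rangle}(F_x\times F_y\times F_z)]\times\langle s_1\rangle$; $a_i=x_iz_i$, $b_i=y_iz_i$, $R_{xz}=\{a_i\}$, $R_{yz}=\{b_i\}$; $G_2=\langle G_1,s_2\mid s_2^{-1}a_is_2=b_i,\ 1\le i\le p\rangle$; $G_m=\langle G_{m-1},s_m\mid s_m^{-1}s_1s_m=s_{m-1}\rangle$ for $m\ge3$. Generating sets: $S_1=T\cup R_x\cup R_y\cup R_z\cup R_{xz}\cup R_{yz}\cup\{s_1\}$ and $S_m=S_{m-1}\cup\{s_m\}$ for $m\ge2$. *)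

(* Groups are given by presentations:
   a group element is a word over an alphabet of generators, modulo the
   congruence generated by free cancellation and the relators. *)
From mathcomp Require Import all_boot.
Set Implicit Arguments. Unset Strict Implicit. Unset Printing Implicit Defensive.

(* letters: (a, false) = a, (a, true) = a^{-1} *)
Definition word (A : Type) := seq (A * bool).

Inductive weq (A : Type) (R : word A -> Prop) : word A -> word A -> Prop :=
| weq_refl u : weq R u u
| weq_sym u v : weq R u v -> weq R v u
| weq_trans u v w : weq R u v -> weq R v w -> weq R u w
| weq_free u v a b : weq R (u ++ (a, b) :: (a, ~~ b) :: v) (u ++ v)
| weq_rel u v r : R r -> weq R (u ++ r ++ v) (u ++ v).

Fixpoint reduced (A : eqType) (w : word A) : bool :=
  match w with
  | x :: ((y :: _) as t) => ~~ ((x.1 == y.1) && (x.2 != y.2)) && reduced t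
  | _ => true
  end.

(* distance in the Cayley graph Gamma(<A|R>, S) between the vertices
   represented by u and v is <= n: some word w over S with |w| <= n
   satisfies u w = v in the group. *)
Definition cay_dist_le (A : Type) (R : word A -> Prop) (S : A -> bool)
    (u v : word A) (n : nat) : Prop :=
  exists w : word A, all (fun l => S l.1) w /\ size w <= n /\ weq R (u ++ w) v.

(* generators: T, x_i, y_i, z_i, a_i = x_i z_i, b_i = y_i z_i, s_k (k >= 1) *)
Inductive gen (T : Type) (p : nat) : Type :=
| GT of T | GX of 'I_p | GY of 'I_p | GZ of 'I_p
| GA of 'I_p | GB of 'I_p | GS of nat.

Definition inS (T : Type) (p m : nat) (g : gen T p) : bool :=
  match g with GS k => (0 < k) && (k <= m) | _ => true end.

Definition commw (A : Type) (g h : A) : word A :=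
  [:: (g, true); (h, true); (g, false); (h, false)].

Definition relG1 (T : eqType) (relsH : seq (word T)) (p : nat) (d : 'I_p -> T)
    (w : word (gen T p)) : Prop :=
  (exists r, r \in relsH /\ w = map (fun l => (GT p l.1, l.2)) r)
  (* F_x x F_y x F_z *)
  \/ (exists i j : 'I_p, w = commw (GX T i) (GY T j) \/ w = commw (GX T i) (GZ T j)
                         \/ w = commw (GY T i) (GZ T j))
  (* amalgamation d_i = x_i y_i^{-1} *)
  \/ (exists i : 'I_p, w = [:: (GT p (d i), false); (GY T i, false); (GX T i, true)])
  \/ (exists i : 'I_p, w = [:: (GA T i, true); (GX T i, false); (GZ T i, false)]
                    \/ w = [:: (GB T i, true); (GY T i, false); (GZ T i, false)])
  (* direct product with <s_1> *)
  \/ (exists g : gen T p, (g \notin [pred h | if h is GS _ then true else false])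
                          /\ w = commw (GS T p 1) g).

Definition relG (T : eqType) (relsH : seq (word T)) (p : nat) (d : 'I_p -> T)
    (m : nat) (w : word (gen T p)) : Prop :=
  relG1 relsH d w
  \/ (2 <= m /\ exists i : 'I_p,
        w = [:: (GS T p 2, true); (GA T i, false); (GS T p 2, false); (GB T i, true)])
  \/ (exists k, 3 <= k <= m /\
        w = [:: (GS T p k, true); (GS T p 1, false); (GS T p k, false); (GS T p k.-1, true)]).

(* For m >= 2, G_m is the HNN extension of G_{m-1} with stable letter s_m
   conjugating a_i to b_i (m = 2), resp. s_1 to s_{m-1} (m >= 3).  Both
   associated subgroups are retracts of G_{m-1} through one homomorphism onto
   a free group, which deletes every letter except the z_i, a_i, b_i (resp.
   the s_k).  With such
   retractions, van der Waerden's action on reduced sequences proves Britton's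
   lemma: if u w = v in G_m with u, v in G_{m-1}, then either w avoids s_m and
   u w = v already holds in G_{m-1}, or w contains a pinch s_m^e y s_m^-e with
   y in the associated subgroup.  Replacing the pinch by the retraction of y
   gives a shorter word over S_m, so induction on |w| yields a word over
   S_{m-1} of at most the same length. *)

From mathcomp Require Import all_boot zify.
From Stdlib Require Import ClassicalEpsilon.
Set Implicit Arguments. Unset Strict Implicit. Unset Printing Implicit Defensive.

Section GroupWords.
Variables (A : Type) (R : word A -> Prop).

Definition winv (w : word A) : word A := rev (map (fun l => (l.1, ~~ l.2)) w).

Lemma winv_cat x y : winv (x ++ y) = winv y ++ winv x.
Proof. by rewrite /winv map_cat rev_cat. Qed.

Lemma winv_cons l x : winv (l :: x) = winv x ++ [:: (l.1, ~~ l.2)].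
Proof. by rewrite -cat1s winv_cat. Qed.

Lemma winvK : involutive winv.
Proof.
move=> x; rewrite /winv map_rev revK -map_comp -[RHS]map_id.
by apply: eq_map => -[a b] /=; rewrite negbK.
Qed.

Lemma weq_catl u x y : weq R x y -> weq R (u ++ x) (u ++ y).
Proof.
elim=> {x y} [z|z z' _|z1 z2 z3 _ IH1 _ IH2|x y a b|x y r Rr].
- exact: weq_refl.
- exact: weq_sym.
- exact: weq_trans IH2.
- by rewrite !catA; apply: weq_free.
- by rewrite !catA -(catA _ r); apply: weq_rel.
Qed.

Lemma weq_catr v x y : weq R x y -> weq R (x ++ v) (y ++ v).
Proof.
elim=> {x y} [z|z z' _|z1 z2 z3 _ IH1 _ IH2|x y a b|x y r Rr].
- exact: weq_refl.
- exact: weq_sym.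
- exact: weq_trans IH2.
- by rewrite -!catA; apply: weq_free.
- by rewrite -!catA; apply: weq_rel.
Qed.

Lemma weq_cat x x' y y' : weq R x x' -> weq R y y' -> weq R (x ++ y) (x' ++ y').
Proof. by move=> /(weq_catr y) Hx /(weq_catl x') Hy; apply: weq_trans Hy. Qed.

Lemma weq_catV x : weq R (x ++ winv x) [::].
Proof.
elim: x => [|[a b] x IH]; first exact: weq_refl.
rewrite winv_cons catA.
apply: weq_trans (weq_free R [::] [::] a b).
exact: (weq_catl [:: (a, b)] (weq_catr _ IH)).
Qed.

Lemma weq_Vcat x : weq R (winv x ++ x) [::].
Proof. by have := weq_catV (winv x); rewrite winvK. Qed.

Lemma weq_of_catV x y : weq R (x ++ winv y) [::] -> weq R x y.
Proof.
move=> /(weq_catr y); rewrite -catA => H.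
apply: weq_trans H; rewrite -{1}(cats0 x).
exact/weq_catl/weq_sym/weq_Vcat.
Qed.

Lemma weq_of_Vcat x y : weq R (winv y ++ x) [::] -> weq R x y.
Proof.
move=> /(weq_catl y); rewrite catA cats0 => H.
apply: weq_trans H; rewrite -{1}(cat0s x).
exact/weq_catr/weq_sym/weq_catV.
Qed.

Lemma weq_winv x y : weq R x y -> weq R (winv x) (winv y).
Proof.
move=> H; apply: weq_of_catV; rewrite winvK.
exact: weq_trans (weq_catl _ (weq_sym H)) (weq_Vcat x).
Qed.

Lemma weq_conj_nil h x : weq R (winv h ++ x ++ h) [::] -> weq R x [::].
Proof.
move=> H; apply: weq_trans (weq_catV h).
apply: weq_trans (weq_catl h (weq_catr (winv h) H)).
have := weq_cat (weq_catV h) (weq_catl x (weq_catV h)).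
by rewrite /= cats0 -!catA => /weq_sym.
Qed.

End GroupWords.

Lemma weq_sub (A : Type) (R R' : word A -> Prop) x y :
  (forall r, R r -> R' r) -> weq R x y -> weq R' x y.
Proof.
move=> RR'; elim=> {x y} [z|z z' _|z1 z2 z3 _ IH1 _ IH2|x y a b|x y r Rr].
- exact: weq_refl.
- exact: weq_sym.
- exact: weq_trans IH2.
- exact: weq_free.
- exact/weq_rel/RR'.
Qed.

Lemma cay_dist_le_sub (A : Type) (R R' : word A -> Prop) (S S' : A -> bool) u v n :
  (forall r, R r -> R' r) -> (forall a, S a -> S' a) ->
  cay_dist_le R S u v n -> cay_dist_le R' S' u v n.
Proof.
move=> RR' SS' [w [Sw [wn uwv]]]; exists w; split; last by split=> //; apply: weq_sub uwv.
by apply: sub_all Sw => l /SS'.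
Qed.

Notation freeq := (weq (fun _ => False)).
Notation wmap f := (map (fun l => (f l.1, l.2))).

Section Projection.
Variables (A I : Type) (psi : A -> option I).

Definition wproj (w : word A) : word I :=
  pmap (fun l => omap (fun i => (i, l.2)) (psi l.1)) w.

Lemma wproj_cat x y : wproj (x ++ y) = wproj x ++ wproj y.
Proof. exact: pmap_cat. Qed.

Lemma wproj_winv x : wproj (winv x) = winv (wproj x).
Proof.
elim: x => [|[a b] x IH] //; rewrite winv_cons wproj_cat IH /=.
by case: (psi a) => [i|] /=; rewrite ?winv_cons ?cats0.
Qed.

Lemma size_wproj w : size (wproj w) <= size w.
Proof. by rewrite size_pmap count_size. Qed.

Lemma wproj_wmap (f : I -> A) y : (forall i, psi (f i) = Some i) -> wproj (wmap f y) = y.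
Proof. by move=> psi_f; elim: y => [|[i b] y IH] //=; rewrite psi_f /= IH. Qed.

Lemma wproj_weq (R : word A -> Prop) x y :
  (forall r, R r -> freeq (wproj r) [::]) -> weq R x y -> freeq (wproj x) (wproj y).
Proof.
move=> Rproj; elim=> {x y} [z|z z' _|z1 z2 z3 _ IH1 _ IH2|x y a b|x y r Rr].
- exact: weq_refl.
- exact: weq_sym.
- exact: weq_trans IH2.
- rewrite !wproj_cat /=; case: (psi a) => [i|] /=; last exact: weq_refl.
  exact: weq_free.
- by rewrite !wproj_cat; apply/weq_catl/(weq_catr _ (Rproj r Rr)).
Qed.

Lemma weq_wmap (R : word A -> Prop) (f : I -> A) y z :
  freeq y z -> weq R (wmap f y) (wmap f z).
Proof.
elim=> {y z} [z|z z' _|z1 z2 z3 _ IH1 _ IH2|y z i b|y z r []].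
- exact: weq_refl.
- exact: weq_sym.
- exact: weq_trans IH2.
- rewrite !map_cat; exact: weq_free.
Qed.

Definition retr (f : I -> A) (w : word A) : word A := wmap f (wproj w).

Lemma retr_cat f x y : retr f (x ++ y) = retr f x ++ retr f y.
Proof. by rewrite /retr wproj_cat map_cat. Qed.

Lemma retr_winv f x : retr f (winv x) = winv (retr f x).
Proof. by rewrite /retr wproj_winv /winv map_rev -!map_comp. Qed.

Lemma retr_retr f g w : (forall i, psi (g i) = Some i) -> retr f (retr g w) = retr f w.
Proof. by move=> psi_g; rewrite /retr wproj_wmap. Qed.

Lemma size_retr f w : size (retr f w) <= size w.
Proof. by rewrite size_map size_wproj. Qed.

Lemma all_retr (S : pred A) f w : (forall i, S (f i)) -> all (fun l => S l.1) (retr f w).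
Proof. by move=> Sf; rewrite /retr; elim: (wproj w) => //= l s ->; rewrite Sf. Qed.

Lemma weq_retr (R : word A -> Prop) f x y :
  (forall r, R r -> freeq (wproj r) [::]) -> weq R x y -> weq R (retr f x) (retr f y).
Proof. by move=> Rproj /(wproj_weq Rproj); apply: weq_wmap. Qed.

End Projection.

Section HNN.
Variables (A I : Type) (isT : pred A) (t : A) (R0 : word A -> Prop)
  (c d : I -> A) (psi : A -> option I).

Definition tfree (w : word A) : bool := all (fun l => ~~ isT l.1) w.

Lemma tfree_cat x y : tfree (x ++ y) = tfree x && tfree y.
Proof. exact: all_cat. Qed.

Definition side (b : bool) : I -> A := if b then c else d.

Hypothesis isTP : forall a, reflect (a = t) (isT a).
Hypotheses (psi_c : forall i, psi (c i) = Some i) (psi_d : forall i, psi (d i) = Some i).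
Hypotheses (c_notT : forall i, ~~ isT (c i)) (d_notT : forall i, ~~ isT (d i)).
Hypothesis R0_tfree : forall r, R0 r -> tfree r.
Hypothesis R0_proj : forall r, R0 r -> freeq (wproj psi r) [::].

Local Notation weqB := (weq R0).
Local Notation P b := (retr psi (side b)).

Definition hnn_relator (i : I) : word A :=
  [:: (t, true); (c i, false); (t, false); (d i, true)].

Definition hnn_rel (r : word A) : Prop := R0 r \/ exists i, r = hnn_relator i.

Lemma psi_side b i : psi (side b i) = Some i.
Proof. by case: b. Qed.

Lemma P_idem b b' x : P b (P b' x) = P b x.
Proof. exact: retr_retr (psi_side b'). Qed.

Lemma weq_P b x y : weqB x y -> weqB (P b x) (P b y).
Proof. exact: weq_retr R0_proj. Qed.

Lemma weq_P_coset b g : weqB (P b (winv (P b g) ++ g)) [::].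
Proof. rewrite retr_cat retr_winv P_idem; exact: weq_Vcat. Qed.

(* A state [(g, [:: (b1, k1); ...; (bn, kn)])] stands for
   [g (t, b1) k1 ... (t, bn) kn]; it is reduced when each [kj] is a coset
   representative (trivial image under [P bj]) and no [(t, b) 1 (t, ~~ b)]
   occurs. *)
Definition state := (word A * seq (bool * word A))%type.

Definition trivb (k : word A) : bool :=
  if excluded_middle_informative (weqB k [::]) then true else false.

Lemma trivbP k : reflect (weqB k [::]) (trivb k).
Proof. by rewrite /trivb; case: excluded_middle_informative => H; constructor. Qed.

Lemma trivb_weq k k' : weqB k k' -> trivb k = trivb k'.
Proof.
move=> kk'; apply/trivbP/trivbP => [|k'1]; first exact: weq_trans (weq_sym kk').
exact: weq_trans kk' k'1.
Qed.

Definition pops (b : bool) (k : word A) (r : seq (bool * word A)) : bool :=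
  if r is (b', _) :: _ then (b' == ~~ b) && trivb k else false.

Lemma pops_weq b k k' r : weqB k k' -> pops b k r = pops b k' r.
Proof. by case: r => [|[b1 k1] s] //= /trivb_weq ->. Qed.

(* [(t, b) g = P (~~ b) g (t, b) k] with [k := (P b g)^-1 g]. *)
Definition act_t (b : bool) (x : state) : state :=
  let: (g, r) := x in
  let k := winv (P b g) ++ g in
  if pops b k r then (P (~~ b) g ++ (head (b, [::]) r).2, behead r)
  else (P (~~ b) g, (b, k) :: r).

Arguments act_t : simpl never.

Definition act_l (l : A * bool) (x : state) : state :=
  if isT l.1 then act_t l.2 x else (l :: x.1, x.2).

Definition act (w : word A) (x : state) : state := foldr act_l x w.

Fixpoint stack_eq (r r' : seq (bool * word A)) : Prop :=
  match r, r' with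
  | [::], [::] => True
  | (b, k) :: s, (b', k') :: s' => [/\ b = b', weqB k k' & stack_eq s s']
  | _, _ => False
  end.

Definition state_eq (x y : state) : Prop := weqB x.1 y.1 /\ stack_eq x.2 y.2.

Fixpoint reduced_stack (r : seq (bool * word A)) : Prop :=
  match r with
  | [::] => True
  | (b, k) :: s =>
      [/\ weqB (P b k) [::],
          (if s is (b', _) :: _ then weqB k [::] -> b' = b else True)
        & reduced_stack s]
  end.

Lemma stack_eq_refl r : stack_eq r r.
Proof. by elim: r => [|[b k] r IH] //=; split=> //; apply: weq_refl. Qed.

Lemma stack_eq_sym r r' : stack_eq r r' -> stack_eq r' r.
Proof.
elim: r r' => [|[b k] r IH] [|[b' k'] r'] //= [-> kk' rr'].
by split; [| apply: weq_sym | apply: IH].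
Qed.

Lemma stack_eq_trans r1 r2 r3 : stack_eq r1 r2 -> stack_eq r2 r3 -> stack_eq r1 r3.
Proof.
elim: r1 r2 r3 => [|[b k] r IH] [|[b' k'] r'] [|[b'' k''] r''] //=.
move=> [-> kk' rr'] [-> k'k'' r'r'']; split=> //; first exact: weq_trans k'k''.
exact: IH r'r''.
Qed.

Lemma state_eq_refl x : state_eq x x.
Proof. by split; [apply: weq_refl | apply: stack_eq_refl]. Qed.

Lemma state_eq_sym x y : state_eq x y -> state_eq y x.
Proof. by case=> H1 H2; split; [apply: weq_sym | apply: stack_eq_sym]. Qed.

Lemma state_eq_trans x y z : state_eq x y -> state_eq y z -> state_eq x z.
Proof.
by case=> H1 H2 [H3 H4]; split; [apply: weq_trans H3 | apply: stack_eq_trans H4].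
Qed.

Lemma act_t_eq b x y : state_eq x y -> state_eq (act_t b x) (act_t b y).
Proof.
case: x y => g r [g' r'] [/= gg' rr'].
have kk' : weqB (winv (P b g) ++ g) (winv (P b g') ++ g').
  exact: weq_cat (weq_winv (weq_P b gg')) gg'.
have Pgg' := weq_P (~~ b) gg'.
rewrite /act_t; case: r r' rr' => [|[b1 k1] s] [|[b1' k1'] s'] //= [<- k1k1' ss'].
rewrite (trivb_weq kk'); case: ifP => _ /=; last by [].
by split=> //; apply: weq_cat.
Qed.

Lemma act_t_reduced b g r : reduced_stack r -> reduced_stack (act_t b (g, r)).2.
Proof.
rewrite /act_t; case E: pops => /=; first by case: r E => [|[b1 k1] s] //= _ [].
move=> Hr; split=> //; first exact: weq_P_coset.
case: r E Hr => [|[b1 k1] s] //= E _ /trivbP k1_1.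
by move: E; rewrite k1_1 andbT; case: b1; case: (b).
Qed.

Lemma act_tK b g r : reduced_stack r -> state_eq (act_t (~~ b) (act_t b (g, r))) (g, r).
Proof.
move=> Hr; rewrite {2}/act_t; case E: pops; last first.
  rewrite /act_t /= negbK eqxx !P_idem.
  have -> : trivb (winv (P (~~ b) g) ++ P (~~ b) g) by apply/trivbP/weq_Vcat.
  split; last exact: stack_eq_refl.
  by have := weq_catr g (weq_catV R0 (P b g)); rewrite /= -catA.
case: r Hr E => [|[b1 k1] s] //= [Pk1 k1_cancel Hs] /andP [/eqP Eb1 /trivbP g_in].
subst b1; rewrite /act_t negbK.
set k2 := winv _ ++ _.
have k2k1 : weqB k2 k1.
  rewrite /k2 retr_cat P_idem winv_cat -catA; apply: (weq_cat (weq_winv Pk1)).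
  by rewrite catA; apply: (weq_catr k1 (weq_Vcat _ _)).
have -> : pops (~~ b) k2 s = false.
  case: s k1_cancel {Hs} => [|[b2 k2'] s'] //= k1_cancel.
  apply/negP => /andP [/eqP Eb2 /trivbP k2_1].
  by move: Eb2; rewrite (k1_cancel (weq_trans (weq_sym k2k1) k2_1)) negbK; case: (b).
split; last by split=> //; apply: stack_eq_refl.
have Pk1' : weqB (P b k1) [::] by have := weq_P b Pk1; rewrite P_idem.
rewrite /= retr_cat P_idem; apply: weq_trans (weq_catl _ Pk1') _.
by rewrite cats0; apply/weq_sym/weq_of_Vcat.
Qed.

Lemma act_t_cat b y g r : weqB (P b y) y ->
  state_eq (act_t b (y ++ g, r)) (P (~~ b) y ++ (act_t b (g, r)).1, (act_t b (g, r)).2).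
Proof.
move=> Py.
have yy : weqB (winv (P b y) ++ y) [::].
  exact: weq_trans (weq_catr y (weq_winv Py)) (weq_Vcat R0 y).
have kk : weqB (winv (P b (y ++ g)) ++ y ++ g) (winv (P b g) ++ g).
  by rewrite retr_cat winv_cat -catA; apply: weq_catl; rewrite catA; exact: (weq_catr g yy).
rewrite /act_t (pops_weq _ _ kk) retr_cat; case: pops => /=.
  by rewrite -catA; apply: state_eq_refl.
by split; [apply: weq_refl | split=> //; apply: stack_eq_refl].
Qed.

Lemma act_cat u v x : act (u ++ v) x = act u (act v x).
Proof. exact: foldr_cat. Qed.

Lemma act_eq w x y : state_eq x y -> state_eq (act w x) (act w y).
Proof.
elim: w => //= l w IH /IH; rewrite /act_l; case: ifP => _; first exact: act_t_eq.
by case=> H1 H2; split=> //; apply: (weq_catl [:: l] H1).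
Qed.

Lemma act_reduced w x : reduced_stack x.2 -> reduced_stack (act w x).2.
Proof.
elim: w => //= l w IH /IH; rewrite /act_l; case: ifP => // _.
by case: (act w x) => g r; apply: act_t_reduced.
Qed.

Lemma tfree_act w g r : tfree w -> act w (g, r) = (w ++ g, r).
Proof. by elim: w => //= l w IH /andP [/negbTE lT /IH]; rewrite /act_l lT => ->. Qed.

Lemma act_free a b x : reduced_stack x.2 -> state_eq (act_l (a, b) (act_l (a, ~~ b) x)) x.
Proof.
case: x => g r Hr; rewrite /act_l /=; case: (isT a).
  by have := act_tK (~~ b) g Hr; rewrite negbK.
by split; [apply: (weq_free R0 [::] g a b) | apply: stack_eq_refl].
Qed.

Lemma act_hnn_relator i x : reduced_stack x.2 -> state_eq (act (hnn_relator i) x) x.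
Proof.
case: x => g r Hr.
have isT_t : isT t by apply/isTP.
rewrite /hnn_relator /= /act_l /= isT_t (negbTE (c_notT i)) (negbTE (d_notT i)) /=.
have := act_t_cat (b := false) (y := [:: (d i, true)]) g r.
rewrite /retr /wproj /= psi_d /= => /(_ (weq_refl _ _)) [Ha Hb].
apply: state_eq_trans (act_tK false g Hr); apply: act_t_eq.
split=> //=; apply: weq_trans (weq_catl [:: (c i, false)] Ha) _.
exact: (weq_free R0 [::] _ (c i) false).
Qed.

Lemma act_weq u v : weq hnn_rel u v ->
  forall x, reduced_stack x.2 -> state_eq (act u x) (act v x).
Proof.
elim=> {u v} [z|z z' _ IH|z1 z2 z3 _ IH1 _ IH2|u v a b|u v r Rr] x Hx.
- exact: state_eq_refl.
- exact/state_eq_sym/IH.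
- exact: state_eq_trans (IH1 _ Hx) (IH2 _ Hx).
- by rewrite !act_cat; apply/act_eq/act_free/act_reduced.
- rewrite !act_cat; apply: act_eq.
  have := act_reduced v Hx; case: Rr => [R0r | [i ->]]; last exact: act_hnn_relator.
  case: (act v x) => g s _; rewrite tfree_act ?R0_tfree //.
  by split; [apply: (weq_rel [::] g R0r) | apply: stack_eq_refl].
Qed.

Lemma weq_base_of_hnn u v : tfree u -> tfree v -> weq hnn_rel u v -> weqB u v.
Proof.
move=> tu tv /act_weq /(_ ([::], [::]) Logic.I).
by rewrite !tfree_act // !cats0 => -[].
Qed.

Definition has_pinch (w : word A) : Prop :=
  exists w1 e y w2,
    [/\ w = w1 ++ (t, e) :: y ++ (t, ~~ e) :: w2, tfree y & weqB y (P e y)].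

Lemma act_pinch_free w g : ~ has_pinch w -> ~~ tfree w ->
  exists y e w' z k r, [/\ w = y ++ (t, e) :: w', tfree y &
    act w (g, [::]) = (y ++ P (~~ e) z, (e, k) :: r)].
Proof.
elim: w => [|[a b] w IH] //= no_pinch.
have no_pinch_w : ~ has_pinch w.
  move=> [w1 [e [y [w2 [Ew ty Py]]]]]; apply: no_pinch.
  by exists ((a, b) :: w1), e, y, w2; rewrite Ew.
case: (boolP (isT a)) => [/isTP Ea _ | aT /= ntw]; last first.
  have [y [e [w' [z [k [r [Ew ty Eact]]]]]]] := IH no_pinch_w ntw.
  exists ((a, b) :: y), e, w', z, k, r; split; [by rewrite Ew | by rewrite /= aT | ].
  by rewrite /act_l /= Eact (negbTE aT).
subst a; have isT_t : isT t by apply/isTP.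
rewrite /act_l /= isT_t; case: (boolP (tfree w)) => [tw | /(IH no_pinch_w)].
  by rewrite tfree_act // /act_t /=; exists [::], b, w, (w ++ g); eexists; exists [::].
move=> [y [e [w' [z [k [r [Ew ty ->]]]]]]]; rewrite /act_t; case E: pops; last first.
  by exists [::], b, w, (y ++ P (~~ e) z); eexists; exists ((e, k) :: r).
move: E => /= /andP [/eqP Ee /trivbP Hk]; subst e; exfalso; apply: no_pinch.
exists [::], b, y, w'; split=> //; first by rewrite Ew.
apply: weq_of_Vcat; apply: (weq_conj_nil (h := P b z)).
by move: Hk; rewrite negbK retr_cat P_idem winv_cat -!catA.
Qed.

Lemma britton u w v :
  tfree u -> tfree v -> ~~ tfree w -> weq hnn_rel (u ++ w) v -> has_pinch w.
Proof.
move=> tu tv ntw /act_weq /(_ ([::], [::]) Logic.I).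
case: (excluded_middle_informative (has_pinch w)) => // no_pinch.
have [y [e [w' [z [k [r [_ _ Eact]]]]]]] := act_pinch_free [::] no_pinch ntw.
by rewrite act_cat Eact !tfree_act // => -[].
Qed.

Lemma weq_conj_side e i b :
  weq hnn_rel [:: (t, e); (side e i, b); (t, ~~ e)] [:: (side (~~ e) i, b)].
Proof.
have H1 : weq hnn_rel [:: (t, true); (c i, false); (t, false)] [:: (d i, false)].
  apply: weq_of_catV.
  exact: (weq_rel [::] [::] (or_intror (ex_intro _ i erefl) : hnn_rel (hnn_relator i))).
have H2 : weq hnn_rel [:: (t, false); (d i, false); (t, true)] [:: (c i, false)].
  apply: weq_trans (weq_sym (weq_catl [:: (t, false)] (weq_catr [:: (t, true)] H1))) _.
  apply: weq_trans (weq_free hnn_rel [::] [:: (c i, false); (t, false); (t, true)] t false) _.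
  exact: (weq_free hnn_rel [:: (c i, false)] [::] t false).
by case: e; case: b => //=; [apply: (weq_winv H1) | apply: (weq_winv H2)].
Qed.

Lemma weq_conj_wmap e z :
  weq hnn_rel ((t, e) :: wmap (side e) z ++ [:: (t, ~~ e)]) (wmap (side (~~ e)) z).
Proof.
elim: z => [|[i b] z IH] /=; first exact: (weq_free hnn_rel [::] [::] t e).
have := weq_free hnn_rel [:: (t, e); (side e i, b)] (wmap (side e) z ++ [:: (t, ~~ e)]).
move=> /(_ t (~~ e)); rewrite negbK => /weq_sym /weq_trans; apply.
exact: (weq_cat (weq_conj_side e i b) IH).
Qed.

Lemma weq_conj_pinch e y : weqB y (P e y) ->
  weq hnn_rel ((t, e) :: y ++ [:: (t, ~~ e)]) (P (~~ e) y).
Proof.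
move=> Py; apply: weq_trans (weq_conj_wmap e (wproj psi y)).
apply: (weq_catl [:: (t, e)]); apply: weq_catr.
by apply: weq_sub Py => r R0r; left.
Qed.

Theorem cay_dist_le_hnn (S : pred A) u v n :
  (forall i, S (c i)) -> (forall i, S (d i)) -> tfree u -> tfree v ->
  cay_dist_le hnn_rel S u v n -> cay_dist_le R0 (fun a => S a && ~~ isT a) u v n.
Proof.
move=> Sc Sd tu tv.
have Sside b i : S (side b i) by case: b.
have base w m : all (fun l => S l.1) w -> size w <= m -> tfree w ->
    weq hnn_rel (u ++ w) v -> cay_dist_le R0 (fun a => S a && ~~ isT a) u v m.
  move=> Sw wm tw uwv; exists w; split; last split=> //.
    by rewrite (@all_predI _ (fun l => S l.1) (fun l => ~~ isT l.1)) Sw.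
  by apply: weq_base_of_hnn => //; rewrite tfree_cat tu.
elim: n => [|n IH] [w [Sw [wn uwv]]].
  by case: w wn Sw uwv => // _ Sw; apply: base Sw _ _.
case: (boolP (tfree w)) => [tw | /(britton tu tv)/(_ uwv) [w1 [e [y [w2 [Ew ty Py]]]]]].
  exact: base w _ Sw wn tw uwv.
suff /IH [w' [Sw' [w'n uw'v]]] : cay_dist_le hnn_rel S u v n.
  by exists w'; do !split=> //; apply: leqW.
exists (w1 ++ P (~~ e) y ++ w2); split; [|split].
- rewrite !all_cat all_retr //; move: Sw.
  by rewrite Ew -[(t, e) :: _]cat1s -[(t, ~~ e) :: _]cat1s !all_cat => /and5P [-> _ _ _ ->].
- have := size_retr psi (side (~~ e)) y.
  by move: wn; rewrite Ew !size_cat /= size_cat /=; lia.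
- apply: weq_trans _ uwv; rewrite Ew; do 2!apply: weq_catl.
  by have := weq_catr w2 (weq_conj_pinch Py); rewrite /= -catA => /weq_sym.
Qed.

End HNN.

Section Presentation.
Variables (T : finType) (relsH : seq (word T)) (p : nat) (d : 'I_p -> T).

Local Notation rels := (relG relsH d).
Implicit Types (g : gen T p) (r : word (gen T p)).

Definition isS (m : nat) (g : gen T p) : bool := if g is GS k then k == m else false.

Definition projZ (g : gen T p) : option 'I_p :=
  match g with GZ i | GA i | GB i => Some i | _ => None end.

Definition projS (g : gen T p) : option unit := if g is GS _ then Some tt else None.

Lemma isSP m g : reflect (g = GS T p m) (isS m g).
Proof.
case: g => [x|i|i|i|i|i|k] /=; try by constructor.
by apply: (iffP eqP) => [-> | []].
Qed.

Lemma inS_pred m g : inS m.-1 g -> inS m g.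
Proof. by case: g => //= k; lia. Qed.

Lemma inS_pred_notS m g : 2 <= m -> inS m.-1 g -> ~~ isS m g.
Proof. by case: g => //= k; lia. Qed.

Lemma inS_pred_of_notS m g : inS m g && ~~ isS m g -> inS m.-1 g.
Proof. by case: g => //= k; lia. Qed.

Lemma relG_pred m r : rels m.-1 r -> rels m r.
Proof.
case=> [H | [[m2 H] | [k [km H]]]]; [left | right; left | right; right] => //.
  by split=> //; lia.
by exists k; split=> //; lia.
Qed.

Lemma relG_notS m : 2 <= m -> forall r, rels m.-1 r -> tfree (isS m) r.
Proof.
move=> m2 r.
case=> [[[r' [_ ->]] | [[i [j [->|[->|->]]]] | [[i ->] | [[i [->|->]] | [g [Hg ->]]]]]]
      | [[m3 [i ->]] | [k [km ->]]]] //=.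
- by elim: r'.
- by case: g Hg => //= *; lia.
- lia.
- lia.
Qed.

Lemma relG_projZ k r : rels k r -> freeq (wproj projZ r) [::].
Proof.
case=> [[[r' [_ ->]] | [[i [j [->|[->|->]]]] | [[i ->] | [[i [->|->]] | [g [Hg ->]]]]]]
      | [[_ [i ->]] | [k' [_ ->]]]];
  first by elim: r' => [|l r' IH] //=; apply: weq_refl.
all: try solve [exact: weq_refl | exact: (weq_free _ [::] [::] _ _)].
by case: g Hg => //= *; solve [exact: weq_refl | exact: (weq_free _ [::] [::] _ _)].
Qed.

Lemma relG_projS k r : rels k r -> freeq (wproj projS r) [::].
Proof.
case=> [[[r' [_ ->]] | [[i [j [->|[->|->]]]] | [[i ->] | [[i [->|->]] | [g [Hg ->]]]]]]
      | [[_ [i ->]] | [k' [_ ->]]]];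
  first by elim: r' => [|l r' IH] //=; apply: weq_refl.
all: try solve [exact: weq_refl | exact: (weq_free _ [::] [::] _ _)].
- by case: g Hg => //= *; exact: (weq_free _ [::] [::] _ _).
- apply: weq_trans (weq_free _ [::] [:: (tt, false); (tt, true)] tt true) _.
  exact: (weq_free _ [::] [::] tt false).
Qed.

Lemma relG2_hnn r : rels 2 r -> hnn_rel (GS T p 2) (rels 1) (@GA T p) (@GB T p) r.
Proof.
case=> [H | [[_ [i ->]] | [k [k23 _]]]]; [by left; left | by right; exists i | lia].
Qed.

Lemma relG_hnn m : 3 <= m -> forall r, rels m r ->
  hnn_rel (GS T p m) (rels m.-1) (fun _ : unit => GS T p 1) (fun _ => GS T p m.-1) r.
Proof.
move=> m3 r; case=> [H | [[_ [i ->]] | [k [km ->]]]].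
- by left; left.
- by left; right; left; split; [lia | exists i].
- have [-> | ne_km] := eqVneq k m; first by right; exists tt.
  by left; right; right; exists k; split=> //; lia.
Qed.

Lemma cay_dist_le_G2 u v n : tfree (isS 2) u -> tfree (isS 2) v ->
  cay_dist_le (rels 2) (inS 2) u v n ->
  cay_dist_le (rels 1) (fun g => inS 2 g && ~~ isS 2 g) u v n.
Proof.
move=> tu tv /(cay_dist_le_sub relG2_hnn (fun _ => id)) dist.
exact: (cay_dist_le_hnn (psi := projZ) (c := @GA T p) (d := @GB T p) (isSP 2)
  (fun i => erefl) (fun i => erefl) (fun i => erefl) (fun i => erefl)
  (relG_notS (leqnn 2)) (@relG_projZ 1) (fun i => erefl) (fun i => erefl) tu tv dist).
Qed.

Lemma cay_dist_le_Gm m u v n : 3 <= m -> tfree (isS m) u -> tfree (isS m) v ->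
  cay_dist_le (rels m) (inS m) u v n ->
  cay_dist_le (rels m.-1) (fun g => inS m g && ~~ isS m g) u v n.
Proof.
move=> m3 tu tv /(cay_dist_le_sub (relG_hnn m3) (fun _ => id)) dist.
have projS_GS k (i : unit) : projS (GS T p k) = Some i by case: i.
apply: (cay_dist_le_hnn (psi := projS) (isSP m) (projS_GS 1) (projS_GS m.-1)
  _ _ (relG_notS (ltnW m3)) (@relG_projS m.-1) _ _ tu tv dist) => _ /=; lia.
Qed.

End Presentation.

Theorem lemma3p3 (T : finType) (relsH : seq (word T)) (p : nat) (d : 'I_p -> T)
  (d_inj : injective d)
  (F_free : forall w : word 'I_p, reduced w -> w != [::] ->
     ~ weq (fun r => r \in relsH) (map (fun l => (d l.1, l.2)) w) [::])
  (m : nat) (hm : 2 <= m) :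
  forall u v : word (gen T p),
    all (fun l => inS (m.-1) l.1) u -> all (fun l => inS (m.-1) l.1) v ->
    forall n : nat,
      cay_dist_le (relG relsH d m.-1) (inS m.-1) u v n <->
      cay_dist_le (relG relsH d m) (inS m) u v n.
Proof.
move=> u v Su Sv n; split.
  by apply: cay_dist_le_sub => [r|g]; [apply: relG_pred | apply: inS_pred].
have tfree_pred w : all (fun l => inS m.-1 l.1) w -> tfree (isS m) w.
  by apply: sub_all => l /(inS_pred_notS hm).
move=> dist; apply: cay_dist_le_sub (fun r => id) (@inS_pred_of_notS _ _ m) _.
have [m2 | m3] : m = 2 \/ 3 <= m by lia.
  by subst m; apply: cay_dist_le_G2; rewrite ?tfree_pred.
by apply: cay_dist_le_Gm; rewrite ?tfree_pred.
Qed.
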